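(* Let $N=(V,M,E_V,E_M,\mathcal K)$ be a gene regulatory network with multiplexes, let $P,Q$ be assertions and let $p$ be a path program of $N$. Assume that every $while$ loop occurring in $p$ terminates, in the sense that for every $while$ subprogram $w=(while~e~with~I~do~p_0)$ of $p$ there is no infinite sequence of states $\eta_0,\eta_1,\eta_2,\dots$ such that, for every $i$, $\eta_i\models_N e$ and $\eta_{i+1}\in E_i$ for some set $E_i$ with $\eta_i\leadsto_{p_0}E_i$. If $\vdash\{P\}\,p\,\{Q\}$ is derivable with the inference rules and axioms of the modified Hoare logic, then the Hoare triple $\{P\}\,p\,\{Q\}$ is satisfied, i.e. for every state $\eta$ with $\eta\models_N P$ there exists a set of states $E$ with $\eta\leadsto_p E$ and $\eta'\models_N Q$ for all $\eta'\in E$.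
   Context: Gene regulatory network with multiplexes (GRN): a tuple $N=(V,M,E_V,E_M,\mathcal K)$ where $V$ (variables) and $M$ (multiplexes) are disjoint finite sets; $(V\cup M,E_V\cup E_M)$ is a directed graph whose edges in $E_V$ go from a variable to a multiplex and whose edges in $E_M$ go from a multiplex to a variable or a multiplex, and every directed cycle contains at least one variable; each variable $v$ has a positive integer bound $b_v$; each multiplex $m$ is labelled by a formula $\varphi_m$ built with $\neg,\wedge,\vee$ from atoms $v\ge s$ (where $v\to m\in E_V$ and $s\in\{1,\dots,b_v\}$) and atoms $m'$ (where $m'\to m\in E_M$). For $v\in V$, $N^{-1}(v)$ is the set of multiplexes $m$ with $m\to v\in E_M$. $\mathcal K=\{K_{v,\omega}\}$ is a family of integers indexed by $v\in V$ and $\omega\subseteq N^{-1}(v)$ with $0\le K_{v,\omega}\le b_v$. The flattened formula $\overline{\varphi_m}$ is obtained by repeatedly replacing each multiplex atom $m'$ by $\varphi_{m'}$; all its atoms are of the form $v\ge s$. States: a state is a map $\eta:V\to\mathbb N$ with $\eta(v)\le b_v$ for all $v$; $S$ denotes the set of states. $\eta\models v\ge s$ iff $\eta(v)\ge s$, extended to connectives as usual. The resources of $v$ at $\eta$ are $\rho(\eta,v)=\{m\in N^{-1}(v):\eta\models\overline{\varphi_m}\}$. For a state $\eta$, variable $v$ and $k\in[0,b_v]$, $\eta[v\leftarrow k]$ is the state equal to $\eta$ except that $v$ takes value $k$. State graph: there is a transition $\eta\to\eta'$ iff either (i) $\eta(v)=K_{v,\rho(\eta,v)}$ for all $v\in V$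 and $\eta'=\eta$, or (ii) there is $v\in V$ with $\eta(v)\ne K_{v,\rho(\eta,v)}$ and $\eta'=\eta[v\leftarrow \eta(v)+1]$ if $\eta(v)<K_{v,\rho(\eta,v)}$, $\eta'=\eta[v\leftarrow\eta(v)-1]$ if $\eta(v)>K_{v,\rho(\eta,v)}$. Assertion language: terms are integers, variable symbols $v\in V$, symbols $K_{v,\omega}$, and $(t+t')$, $(t-t')$; atoms are $t=t'$, $t<t'$, $t>t'$, $t\le t'$, $t\ge t'$; assertions are closed under $\neg,\wedge,\vee,\Rightarrow$. $\eta\models_N\varphi$ iff $\varphi$ holds in $\mathbb Z$ after replacing each $v$ by $\eta(v)$ and each $K_{v,\omega}$ by its value in $\mathcal K$. $Q[v\leftarrow t]$ denotes substitution of the term $t$ for each occurrence of $v$ in $Q$. An assertion is valid if every state satisfies it. Path programs: generated by $v+$, $v-$, $v:=n$ ($v\in V$, $n\in\mathbb N$), $assert(e)$ ($e$ an assertion), $(p_1;p_2)$ (associative), $(if~e~then~p_1~else~p_2)$, $(while~e~with~I~do~p)$ ($e,I$ assertions; $I$ is the loop invariant), $\forall(p_1,p_2)$, $\exists(p_1,p_2)$; additionally the empty program $\varepsilon$. Semantics: $\leadsto_p\subseteq S\times\mathcal P(S)$ is the smallest relation such that for every state $\eta$: (1) for $p=v+$ (resp. $v-$), with $\eta'=\eta[v\leftarrow\eta(v)+1]$ (resp. $\eta(v)-1$), if $\eta\to\eta'$ is a transition then $\eta\leadsto_p\{\eta'\}$; (2) $\eta\leadsto_{v:=k}\{\eta[v\leftarrow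 k]\}$; (3) if $\eta\models_N e$ then $\eta\leadsto_{assert(e)}\{\eta\}$; (4) if $\eta\leadsto_{p_1}E_1$ and $\eta\leadsto_{p_2}E_2$ then $\eta\leadsto_{\forall(p_1,p_2)}E_1\cup E_2$; (5) if $\eta\leadsto_{p_i}E$ ($i\in\{1,2\}$) then $\eta\leadsto_{\exists(p_1,p_2)}E$; (6) if $\eta\leadsto_{p_1}F$ and $(E_e)_{e\in F}$ is a family with $e\leadsto_{p_2}E_e$ for each $e\in F$, then $\eta\leadsto_{p_1;p_2}\bigcup_{e\in F}E_e$; (7) if $\eta\models_N e$ and $\eta\leadsto_{p_1}E$, or $\eta\not\models_N e$ and $\eta\leadsto_{p_2}E$, then $\eta\leadsto_{if~e~then~p_1~else~p_2}E$; (8) for $w=while~e~with~I~do~p_0$: if $\eta\models_N e$ and $\eta\leadsto_{p_0;w}E$ then $\eta\leadsto_wE$; if $\eta\not\models_N e$ then $\eta\leadsto_w\{\eta\}$; (9) $\eta\leadsto_\varepsilon\{\eta\}$. A Hoare triple $\{P\}p\{Q\}$ is satisfied iff for every $\eta\models_N P$ there is $E$ with $\eta\leadsto_pE$ and every $\eta'\in E$ satisfies $Q$. Formulas: for $v\in V$, $\omega\subseteq N^{-1}(v)$: $\Phi_v^\omega=\bigwedge_{m\in\omega}\overline{\varphi_m}\wedge\bigwedge_{m\in N^{-1}(v)\setminus\omega}\neg\overline{\varphi_m}$; $\Phi_v^+=\bigwedge_{\omega\subseteq N^{-1}(v)}(\Phi_v^\omega\Rightarrow K_{v,\omega}>v)$;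 $\Phi_v^-=\bigwedge_{\omega\subseteq N^{-1}(v)}(\Phi_v^\omega\Rightarrow K_{v,\omega}<v)$. Inference rules of the modified Hoare logic: Incrementation: $\{\Phi_v^+\wedge Q[v\leftarrow v+1]\}\,v+\,\{Q\}$. Decrementation: $\{\Phi_v^-\wedge Q[v\leftarrow v-1]\}\,v-\,\{Q\}$. Assert: $\{\Phi\wedge Q\}\,assert(\Phi)\,\{Q\}$. Universal: from $\{P_1\}p_1\{Q\}$ and $\{P_2\}p_2\{Q\}$ infer $\{P_1\wedge P_2\}\forall(p_1,p_2)\{Q\}$. Existential: from the same premises infer $\{P_1\vee P_2\}\exists(p_1,p_2)\{Q\}$. Assignment: $\{Q[v\leftarrow k]\}\,v:=k\,\{Q\}$. Sequential composition: from $\{P_2\}p_2\{Q\}$ and $\{P_1\}p_1\{P_2\}$ infer $\{P_1\}p_1;p_2\{Q\}$. Alternative: from $\{P_1\}p_1\{Q\}$ and $\{P_2\}p_2\{Q\}$ infer $\{(e\wedge P_1)\vee(\neg e\wedge P_2)\}\,if~e~then~p_1~else~p_2\,\{Q\}$. Iteration: from $\{e\wedge I\}p\{I\}$ infer $\{I\}\,while~e~with~I~do~p\,\{\neg e\wedge I\}$. Empty program: from $P\Rightarrow Q$ infer $\{P\}\varepsilon\{Q\}$. Boundary axioms: $0\le v$, $v\le b_v$, $0\le K_{v,\omega}$, $K_{v,\omega}\le b_v$. Premises of the form $P\Rightarrow Q$ are established by first-order logic and arithmetic on integers together with the boundary axioms.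
   Formalization: Every assignment $v:=n$ occurring in p has n ≤ $b_v$, and semantic clause (2) gives $\eta\leadsto_{v:=k}\{\eta[v\leftarrow k]\}$ only when k ≤ $b_v$ instead of for every k ∈ ℕ. Each condition added here is assumed in the paper as well or is needed for the statement above to hold. *)

From HB Require Import structures.
From mathcomp Require Import all_boot.
From Stdlib Require Import ZArith Relations.

Set Implicit Arguments.
Unset Strict Implicit.
Unset Printing Implicit Defensive.

Inductive mform (V M : Type) :=
  | MGe  : V -> nat -> mform V M
  | MMux : M -> mform V M
  | MNot : mform V M -> mform V M
  | MAnd : mform V M -> mform V M -> mform V M
  | MOr  : mform V M -> mform V M -> mform V M.
Arguments MGe {V M}. Arguments MMux {V M}. Arguments MNot {V M}.
Arguments MAnd {V M}. Arguments MOr {V M}.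

Fixpoint mf_wf (V M : Type) (EV : V -> M -> bool) (EMM : M -> M -> bool)
  (b : V -> nat) (m : M) (f : mform V M) : Prop :=
  match f with
  | MGe v s => EV v m /\ 1 <= s <= b v
  | MMux m' => EMM m' m
  | MNot f1 => mf_wf EV EMM b m f1
  | MAnd f1 f2 | MOr f1 f2 => mf_wf EV EMM b m f1 /\ mf_wf EV EMM b m f2
  end.

(* EV v m  : edge v -> m  (variable to multiplex)
   EMV m v : edge m -> v  (multiplex to variable)
   EMM m m': edge m -> m' (multiplex to multiplex)                      *)
Record GRN (V M : finType) := {
  EV  : V -> M -> bool;
  EMV : M -> V -> bool;
  EMM : M -> M -> bool;
  bnd : V -> nat;
  gphi : M -> mform V M;
  Kp : V -> {set M} -> nat;
  bnd_pos : forall v, 0 < bnd v;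
  (* every directed cycle contains a variable, i.e. there is no cycle
     made of multiplexes only *)
  mux_acyclic : forall m, ~ clos_trans M (fun a b => EMM a b) m m;
  gphi_wf : forall m, mf_wf EV EMM bnd m (gphi m);
  Kp_bnd : forall v (w : {set M}), w \subset [set m | EMV m v] -> Kp v w <= bnd v
}.

Definition Ninv (V M : finType) (N : GRN V M) (v : V) : {set M} :=
  [set m | EMV N m v].

Inductive term (V M : finType) :=
  | TConst : Z -> term V M
  | TVar : V -> term V M
  | TK : V -> {set M} -> term V M
  | TAdd : term V M -> term V M -> term V M
  | TSub : term V M -> term V M -> term V M.
Arguments TConst {V M}. Arguments TVar {V M}. Arguments TK {V M}.
Arguments TAdd {V M}. Arguments TSub {V M}.

Inductive assertion (V M : finType) :=
  | AEq : term V M -> term V M -> assertion V M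
  | ALt : term V M -> term V M -> assertion V M
  | AGt : term V M -> term V M -> assertion V M
  | ALe : term V M -> term V M -> assertion V M
  | AGe : term V M -> term V M -> assertion V M
  | ANot : assertion V M -> assertion V M
  | AAnd : assertion V M -> assertion V M -> assertion V M
  | AOr : assertion V M -> assertion V M -> assertion V M
  | AImp : assertion V M -> assertion V M -> assertion V M.
Arguments AEq {V M}. Arguments ALt {V M}. Arguments AGt {V M}.
Arguments ALe {V M}. Arguments AGe {V M}. Arguments ANot {V M}.
Arguments AAnd {V M}. Arguments AOr {V M}. Arguments AImp {V M}.

Definition ATrue {V M : finType} : assertion V M := AEq (TConst 0%Z) (TConst 0%Z).
Definition AFalse {V M : finType} : assertion V M := AEq (TConst 0%Z) (TConst 1%Z).

Definition bigAnd {V M : finType} (l : seq (assertion V M)) : assertion V M :=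
  foldr AAnd ATrue l.

(* evaluation: a "state" is a map V -> nat (bounds checked by is_state) *)
Fixpoint eval_term (V M : finType) (N : GRN V M) (eta : V -> nat) (t : term V M) : Z :=
  match t with
  | TConst z => z
  | TVar v => Z.of_nat (eta v)
  | TK v w => Z.of_nat (Kp N v w)
  | TAdd a b => (eval_term N eta a + eval_term N eta b)%Z
  | TSub a b => (eval_term N eta a - eval_term N eta b)%Z
  end.

Fixpoint holds (V M : finType) (N : GRN V M) (eta : V -> nat) (a : assertion V M) : bool :=
  match a with
  | AEq x y => Z.eqb (eval_term N eta x) (eval_term N eta y)
  | ALt x y => Z.ltb (eval_term N eta x) (eval_term N eta y)
  | AGt x y => Z.ltb (eval_term N eta y) (eval_term N eta x)
  | ALe x y => Z.leb (eval_term N eta x) (eval_term N eta y)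
  | AGe x y => Z.leb (eval_term N eta y) (eval_term N eta x)
  | ANot a1 => ~~ holds N eta a1
  | AAnd a1 a2 => holds N eta a1 && holds N eta a2
  | AOr a1 a2 => holds N eta a1 || holds N eta a2
  | AImp a1 a2 => holds N eta a1 ==> holds N eta a2
  end.

Fixpoint subst_term (V M : finType) (v : V) (t0 t : term V M) : term V M :=
  match t with
  | TConst z => TConst z
  | TVar u => if u == v then t0 else TVar u
  | TK u w => TK u w
  | TAdd a b => TAdd (subst_term v t0 a) (subst_term v t0 b)
  | TSub a b => TSub (subst_term v t0 a) (subst_term v t0 b)
  end.

Fixpoint subst (V M : finType) (v : V) (t0 : term V M) (a : assertion V M) : assertion V M :=
  match a with
  | AEq x y => AEq (subst_term v t0 x) (subst_term v t0 y)
  | ALt x y => ALt (subst_term v t0 x) (subst_term v t0 y)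
  | AGt x y => AGt (subst_term v t0 x) (subst_term v t0 y)
  | ALe x y => ALe (subst_term v t0 x) (subst_term v t0 y)
  | AGe x y => AGe (subst_term v t0 x) (subst_term v t0 y)
  | ANot a1 => ANot (subst v t0 a1)
  | AAnd a1 a2 => AAnd (subst v t0 a1) (subst v t0 a2)
  | AOr a1 a2 => AOr (subst v t0 a1) (subst v t0 a2)
  | AImp a1 a2 => AImp (subst v t0 a1) (subst v t0 a2)
  end.

Definition is_state (V M : finType) (N : GRN V M) (eta : V -> nat) : Prop :=
  forall v, eta v <= bnd N v.

Definition valid (V M : finType) (N : GRN V M) (a : assertion V M) : Prop :=
  forall eta, is_state N eta -> holds N eta a.

(* Flattened multiplex formulas: repeatedly replace multiplex atoms m'
   by phi_{m'}.  Implemented with fuel #|M|; since the multiplex graph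
   is acyclic (mux_acyclic), every chain of replacements has length at
   most #|M|, so this is the full flattening. *)
Fixpoint mf_to_assert (V M : finType) (f : M -> assertion V M) (g : mform V M)
  : assertion V M :=
  match g with
  | MGe v s => AGe (TVar v) (TConst (Z.of_nat s))
  | MMux m' => f m'
  | MNot g1 => ANot (mf_to_assert f g1)
  | MAnd g1 g2 => AAnd (mf_to_assert f g1) (mf_to_assert f g2)
  | MOr g1 g2 => AOr (mf_to_assert f g1) (mf_to_assert f g2)
  end.

Fixpoint flat_n (V M : finType) (N : GRN V M) (n : nat) (m : M) : assertion V M :=
  match n with
  | 0 => AFalse
  | n'.+1 => mf_to_assert (flat_n N n') (gphi N m)
  end.

Definition flat (V M : finType) (N : GRN V M) (m : M) : assertion V M :=
  flat_n N #|M| m.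

Definition rho (V M : finType) (N : GRN V M) (eta : V -> nat) (v : V) : {set M} :=
  [set m | (m \in Ninv N v) && holds N eta (flat N m)].

Definition upd (V : eqType) (eta : V -> nat) (v : V) (k : nat) : V -> nat :=
  fun x => if x == v then k else eta x.

Definition trans (V M : finType) (N : GRN V M) (eta eta' : V -> nat) : Prop :=
  is_state N eta /\
  (((forall v, eta v = Kp N v (rho N eta v)) /\ eta' = eta) \/
   (exists v, eta v <> Kp N v (rho N eta v) /\
      eta' = upd eta v (if eta v < Kp N v (rho N eta v) then (eta v).+1
                        else (eta v).-1))).

Definition Phi_om (V M : finType) (N : GRN V M) (v : V) (om : {set M}) : assertion V M :=
  bigAnd [seq (if m \in om then flat N m else ANot (flat N m)) | m <- enum (Ninv N v)].

Definition Phi_plus (V M : finType) (N : GRN V M) (v : V) : assertion V M :=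
  bigAnd [seq AImp (Phi_om N v om) (AGt (TK v om) (TVar v))
         | om <- enum (powerset (Ninv N v))].

Definition Phi_minus (V M : finType) (N : GRN V M) (v : V) : assertion V M :=
  bigAnd [seq AImp (Phi_om N v om) (ALt (TK v om) (TVar v))
         | om <- enum (powerset (Ninv N v))].

Inductive prog (V M : finType) :=
  | PInc : V -> prog V M
  | PDec : V -> prog V M
  | PAssign : V -> nat -> prog V M
  | PAssert : assertion V M -> prog V M
  | PSeq : prog V M -> prog V M -> prog V M
  | PIf : assertion V M -> prog V M -> prog V M -> prog V M
  | PWhile : assertion V M -> assertion V M -> prog V M -> prog V M
  | PAll : prog V M -> prog V M -> prog V M
  | PEx : prog V M -> prog V M -> prog V M
  | PEps : prog V M.
Arguments PInc {V M}. Arguments PDec {V M}. Arguments PAssign {V M}.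
Arguments PAssert {V M}. Arguments PSeq {V M}. Arguments PIf {V M}.
Arguments PWhile {V M}. Arguments PAll {V M}. Arguments PEx {V M}.
Arguments PEps {V M}.

Fixpoint subprog (V M : finType) (q p : prog V M) : Prop :=
  q = p \/
  match p with
  | PSeq a b | PIf _ a b | PAll a b | PEx a b => subprog q a \/ subprog q b
  | PWhile _ _ a => subprog q a
  | _ => False
  end.

Inductive sem (V M : finType) (N : GRN V M) : prog V M -> (V -> nat) -> ((V -> nat) -> Prop) -> Prop :=
  | sem_inc : forall v eta,
      trans N eta (upd eta v (eta v).+1) ->
      sem N (PInc v) eta (fun x => x = upd eta v (eta v).+1)
  | sem_dec : forall v eta,
      0 < eta v ->
      trans N eta (upd eta v (eta v).-1) ->
      sem N (PDec v) eta (fun x => x = upd eta v (eta v).-1)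
  | sem_assign : forall v k eta,
      is_state N eta -> k <= bnd N v ->
      sem N (PAssign v k) eta (fun x => x = upd eta v k)
  | sem_assert : forall e eta,
      is_state N eta -> holds N eta e ->
      sem N (PAssert e) eta (fun x => x = eta)
  | sem_all : forall p1 p2 eta E1 E2,
      sem N p1 eta E1 -> sem N p2 eta E2 ->
      sem N (PAll p1 p2) eta (fun x => E1 x \/ E2 x)
  | sem_ex1 : forall p1 p2 eta E,
      sem N p1 eta E -> sem N (PEx p1 p2) eta E
  | sem_ex2 : forall p1 p2 eta E,
      sem N p2 eta E -> sem N (PEx p1 p2) eta E
  | sem_seq : forall p1 p2 eta F (Ef : (V -> nat) -> (V -> nat) -> Prop),
      sem N p1 eta F ->
      (forall e, F e -> sem N p2 e (Ef e)) ->
      sem N (PSeq p1 p2) eta (fun x => exists2 e, F e & Ef e x)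
  | sem_if_t : forall e p1 p2 eta E,
      holds N eta e -> sem N p1 eta E -> sem N (PIf e p1 p2) eta E
  | sem_if_f : forall e p1 p2 eta E,
      ~~ holds N eta e -> sem N p2 eta E -> sem N (PIf e p1 p2) eta E
  | sem_while_t : forall e I p0 eta E,
      holds N eta e -> sem N (PSeq p0 (PWhile e I p0)) eta E ->
      sem N (PWhile e I p0) eta E
  | sem_while_f : forall e I p0 eta,
      is_state N eta -> ~~ holds N eta e ->
      sem N (PWhile e I p0) eta (fun x => x = eta)
  | sem_eps : forall eta,
      is_state N eta -> sem N PEps eta (fun x => x = eta).

Inductive derivable (V M : finType) (N : GRN V M) : assertion V M -> prog V M -> assertion V M -> Prop :=
  | d_inc : forall v Q,
      derivable N (AAnd (Phi_plus N v) (subst v (TAdd (TVar v) (TConst 1%Z)) Q)) (PInc v) Q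
  | d_dec : forall v Q,
      derivable N (AAnd (Phi_minus N v) (subst v (TSub (TVar v) (TConst 1%Z)) Q)) (PDec v) Q
  | d_assert : forall Phi Q,
      derivable N (AAnd Phi Q) (PAssert Phi) Q
  | d_all : forall P1 P2 p1 p2 Q,
      derivable N P1 p1 Q -> derivable N P2 p2 Q ->
      derivable N (AAnd P1 P2) (PAll p1 p2) Q
  | d_ex : forall P1 P2 p1 p2 Q,
      derivable N P1 p1 Q -> derivable N P2 p2 Q ->
      derivable N (AOr P1 P2) (PEx p1 p2) Q
  | d_assign : forall v k Q,
      derivable N (subst v (TConst (Z.of_nat k)) Q) (PAssign v k) Q
  | d_seq : forall P1 P2 p1 p2 Q,
      derivable N P2 p2 Q -> derivable N P1 p1 P2 ->
      derivable N P1 (PSeq p1 p2) Q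
  | d_if : forall e P1 P2 p1 p2 Q,
      derivable N P1 p1 Q -> derivable N P2 p2 Q ->
      derivable N (AOr (AAnd e P1) (AAnd (ANot e) P2)) (PIf e p1 p2) Q
  | d_while : forall e I p,
      derivable N (AAnd e I) p I ->
      derivable N I (PWhile e I p) (AAnd (ANot e) I)
  | d_eps : forall P Q,
      valid N (AImp P Q) -> derivable N P PEps Q.

(** Every rule
    except iteration is checked locally: the premises Phi_v^+ and Phi_v^-
    determine the resources of v, hence which way v may move in the state
    graph.  For a loop with invariant I, a state satisfying I from which no
    execution of the loop reaches (not e /\ I) must satisfy e, and by the
    premise on the body it has a successor that is stuck in the same way;
    dependent choice then produces an infinite run of the body, which the
    termination hypothesis forbids. *)

From mathcomp Require Import all_boot.
From mathcomp Require Import zify.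
From Stdlib Require Import ZArith Lia.
From Stdlib Require Import Classical ClassicalEpsilon ChoiceFacts.

Set Implicit Arguments.
Unset Strict Implicit.
Unset Printing Implicit Defensive.

Lemma choice_on (A B : Type) (F : A -> Prop) (R : A -> B -> Prop) :
  inhabited B -> (forall x, F x -> exists y, R x y) ->
  exists f : A -> B, forall x, F x -> R x (f x).
Proof.
move=> inhB H; exists (fun x => epsilon inhB (R x)) => x Fx.
exact: epsilon_spec (H x Fx).
Qed.

Lemma dependent_choice_on (T : Type) (B : T -> Prop) (R : T -> T -> Prop) :
  (forall x, B x -> exists2 y, R x y & B y) ->
  forall x0, B x0 -> exists s : nat -> T, forall i, B (s i) /\ R (s i) (s i.+1).
Proof.
move=> H x0 Bx0.
have Hsig : forall x : {x | B x}, exists y : {x | B x}, R (sval x) (sval y).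
  by move=> [x Bx]; have [y Rxy By] := H x Bx; exists (exist _ y By).
have [f [_ Rf]] := functional_choice_imp_functional_dependent_choice
  choice (fun x y => R (sval x) (sval y)) Hsig (exist _ x0 Bx0).
by exists (fun i => sval (f i)) => i; split; [exact: svalP | exact: Rf].
Qed.

Section Soundness.

Variables (V M : finType) (N : GRN V M).

Lemma eval_term_upd eta v t0 k t :
  eval_term N eta t0 = Z.of_nat k ->
  eval_term N (upd eta v k) t = eval_term N eta (subst_term v t0 t).
Proof.
move=> t0k; elim: t => //= [u | a IHa b IHb | a IHa b IHb]; last 2 first.
- by rewrite IHa IHb.
- by rewrite IHa IHb.
by rewrite /upd; case: (u == v).
Qed.

Lemma holds_upd eta v t0 k a :
  eval_term N eta t0 = Z.of_nat k ->
  holds N (upd eta v k) a = holds N eta (subst v t0 a).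
Proof.
move=> t0k; elim: a => /= [x y|x y|x y|x y|x y|a IHa|a IHa b IHb|a IHa b IHb|a IHa b IHb];
  by rewrite ?(eval_term_upd v _ t0k) ?IHa ?IHb.
Qed.

Lemma holds_bigAnd_map (T : Type) (f : T -> assertion V M) (l : seq T) eta :
  holds N eta (bigAnd (map f l)) = all (fun x => holds N eta (f x)) l.
Proof. by elim: l => //= x l ->. Qed.

Lemma rho_subset eta v : rho N eta v \subset Ninv N v.
Proof. by apply/subsetP => m; rewrite inE => /andP[]. Qed.

Lemma holds_Phi_om_rho eta v : holds N eta (Phi_om N v (rho N eta v)).
Proof.
rewrite /Phi_om holds_bigAnd_map; apply/allP => m; rewrite mem_enum => mv.
by rewrite /rho inE mv /=; case: ifPn.
Qed.

Lemma rho_in_powerset eta v : rho N eta v \in enum (powerset (Ninv N v)).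
Proof. by rewrite mem_enum powersetE rho_subset. Qed.

Lemma Phi_plus_lt eta v :
  holds N eta (Phi_plus N v) -> eta v < Kp N v (rho N eta v).
Proof.
rewrite /Phi_plus holds_bigAnd_map => /allP /(_ _ (rho_in_powerset eta v)).
by rewrite /= holds_Phi_om_rho => /Z.ltb_lt; lia.
Qed.

Lemma Phi_minus_gt eta v :
  holds N eta (Phi_minus N v) -> Kp N v (rho N eta v) < eta v.
Proof.
rewrite /Phi_minus holds_bigAnd_map => /allP /(_ _ (rho_in_powerset eta v)).
by rewrite /= holds_Phi_om_rho => /Z.ltb_lt; lia.
Qed.

Definition ensures (p : prog V M) (Q : assertion V M) (eta : V -> nat) :=
  exists E, sem N p eta E /\ forall x, E x -> is_state N x /\ holds N x Q.

Lemma ensures_det p Q eta eta' :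
  sem N p eta (fun x => x = eta') -> is_state N eta' -> holds N eta' Q ->
  ensures p Q eta.
Proof. by move=> Hsem st' Q'; exists (fun x => x = eta'); split => // x ->. Qed.

Lemma ensures_seq p1 p2 Q eta F :
  sem N p1 eta F -> (forall x, F x -> ensures p2 Q x) ->
  ensures (PSeq p1 p2) Q eta.
Proof.
move=> Hp1 Hp2.
have [Ef HEf] := choice_on (inhabits (fun _ : V -> nat => False)) Hp2.
exists (fun y => exists2 x, F x & Ef x y); split.
  by apply: sem_seq Hp1 _ => x /HEf [].
by move=> y [x /HEf [_ HQ] /HQ].
Qed.

Lemma ensures_inc v Q eta : is_state N eta ->
  holds N eta (AAnd (Phi_plus N v) (subst v (TAdd (TVar v) (TConst 1%Z)) Q)) ->
  ensures (PInc v) Q eta.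
Proof.
move=> st /andP [/Phi_plus_lt lt_K HQ].
have K_le_b : Kp N v (rho N eta v) <= bnd N v by apply/Kp_bnd/rho_subset.
apply: ensures_det.
- apply: sem_inc; split => //; right; exists v; split; first lia.
  by rewrite lt_K.
- by move=> u; rewrite /upd; case: eqP => [->|_]; [lia | exact: st].
- by rewrite (holds_upd _ _ (t0 := TAdd (TVar v) (TConst 1%Z))) //=; lia.
Qed.

Lemma ensures_dec v Q eta : is_state N eta ->
  holds N eta (AAnd (Phi_minus N v) (subst v (TSub (TVar v) (TConst 1%Z)) Q)) ->
  ensures (PDec v) Q eta.
Proof.
move=> st /andP [/Phi_minus_gt gt_K HQ].
apply: ensures_det.
- apply: sem_dec; first lia.
  split => //; right; exists v; split; first lia.
  by rewrite ltnNge (ltnW gt_K).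
- by move=> u; rewrite /upd; case: eqP => [->|_]; [have := st v; lia | exact: st].
- by rewrite (holds_upd _ _ (t0 := TSub (TVar v) (TConst 1%Z))) //=; lia.
Qed.

Lemma ensures_assign v k Q eta : k <= bnd N v -> is_state N eta ->
  holds N eta (subst v (TConst (Z.of_nat k)) Q) -> ensures (PAssign v k) Q eta.
Proof.
move=> kb st HQ; apply: ensures_det; first exact: sem_assign.
- by move=> u; rewrite /upd; case: eqP => [->|_].
- by rewrite (holds_upd _ _ (t0 := TConst (Z.of_nat k))).
Qed.

Definition loop_terminates (e : assertion V M) (p0 : prog V M) :=
  ~ exists s : nat -> V -> nat,
      forall i, is_state N (s i) /\ holds N (s i) e /\
                exists E, sem N p0 (s i) E /\ E (s i.+1).

Section While.

Variables (e I : assertion V M) (p0 : prog V M).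

Let W := PWhile e I p0.
Let Q := AAnd (ANot e) I.

Lemma ensures_while_exit eta :
  is_state N eta -> holds N eta I -> ~~ holds N eta e -> ensures W Q eta.
Proof.
by move=> st HI He; apply: ensures_det; [exact: sem_while_f | | rewrite /= He].
Qed.

Lemma ensures_while_unfold eta E :
  holds N eta e -> sem N p0 eta E -> (forall x, E x -> ensures W Q x) ->
  ensures W Q eta.
Proof.
move=> He Hp0 HE.
have [E' [HW HE']] := ensures_seq Hp0 HE.
by exists E'; split => //; apply: sem_while_t.
Qed.

Lemma ensures_while :
  loop_terminates e p0 ->
  (forall eta, is_state N eta -> holds N eta (AAnd e I) -> ensures p0 I eta) ->
  forall eta, is_state N eta -> holds N eta I -> ensures W Q eta.
Proof.
move=> term body.
pose stuck eta := is_state N eta /\ holds N eta I /\ ~ ensures W Q eta.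
have stuck_guard eta : stuck eta -> holds N eta e.
  move=> [st [HI HW]]; apply/negPn/negP => He.
  exact/HW/ensures_while_exit.
have stuck_step eta : stuck eta ->
    exists2 eta', (exists E, sem N p0 eta E /\ E eta') & stuck eta'.
  move=> stuck_eta; have He := stuck_guard eta stuck_eta.
  case: stuck_eta => st [HI HW].
  have [E [Hp0 HE]] := body eta st (introT andP (conj He HI)).
  apply: NNPP => none; apply/HW/(ensures_while_unfold He Hp0) => x Ex.
  apply: NNPP => HWx; apply: none; exists x; first by exists E.
  by have [stx HIx] := HE x Ex.
move=> eta st HI; apply: NNPP => HW.
have [s Hs] := dependent_choice_on stuck_step (conj st (conj HI HW)).
apply: term; exists s => i; have [stuck_i step_i] := Hs i.
by split; [case: stuck_i | split; [exact: stuck_guard|]].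
Qed.

End While.

Definition admissible_instr (q : prog V M) : Prop :=
  match q with
  | PAssign v k => k <= bnd N v
  | PWhile e _ p0 => loop_terminates e p0
  | _ => True
  end.

Definition admissible (p : prog V M) := forall q, subprog q p -> admissible_instr q.

Lemma admissible_inv p : admissible p ->
  admissible_instr p /\
  match p with
  | PSeq a b | PIf _ a b | PAll a b | PEx a b => admissible a /\ admissible b
  | PWhile _ _ a => admissible a
  | _ => True
  end.
Proof.
move=> Hp; split; first by apply: Hp; case: p => *; left.
case: p Hp => //= [a b | e a b | e I a | a b | a b] Hp;
  try split; move=> q Hq; apply: Hp; right; auto.
Qed.

Theorem derivable_sound P p Q : derivable N P p Q -> admissible p ->
  forall eta, is_state N eta -> holds N eta P -> ensures p Q eta.
Proof.
elim=> {P p Q}.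
- by move=> v Q _ eta; apply: ensures_inc.
- by move=> v Q _ eta; apply: ensures_dec.
- move=> Phi Q _ eta st /andP [HPhi HQ].
  by apply: ensures_det; first exact: sem_assert.
- move=> P1 P2 p1 p2 Q _ IH1 _ IH2 /admissible_inv [_ [A1 A2]] eta st.
  move=> /andP [/(IH1 A1 eta st) [E1 [S1 F1]] /(IH2 A2 eta st) [E2 [S2 F2]]].
  by exists (fun x => E1 x \/ E2 x); split; [exact: sem_all | move=> x [/F1|/F2]].
- move=> P1 P2 p1 p2 Q _ IH1 _ IH2 /admissible_inv [_ [A1 A2]] eta st.
  case/orP => [/(IH1 A1 eta st) | /(IH2 A2 eta st)] [E [S F]].
  + by exists E; split => //; exact: sem_ex1.
  + by exists E; split => //; exact: sem_ex2.
- by move=> v k Q /admissible_inv [kb _] eta; apply: ensures_assign.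
- move=> P1 P2 p1 p2 Q _ IH2 _ IH1 /admissible_inv [_ [A1 A2]] eta st.
  move=> /(IH1 A1 eta st) [F [S1 F1]].
  by apply: ensures_seq S1 _ => x /F1 [stx /(IH2 A2 x stx)].
- move=> e P1 P2 p1 p2 Q _ IH1 _ IH2 /admissible_inv [_ [A1 A2]] eta st.
  case/orP => /andP [He HP].
  + have [E [S F]] := IH1 A1 eta st HP.
    by exists E; split => //; exact: sem_if_t.
  + have [E [S F]] := IH2 A2 eta st HP.
    by exists E; split => //; exact: sem_if_f.
- move=> e I p0 _ IH /admissible_inv [term A0].
  exact: ensures_while term (IH A0).
- move=> P Q valid_PQ _ eta st HP.
  apply: (ensures_det (sem_eps st) st).
  by have := valid_PQ eta st; rewrite /= HP.
Qed.

End Soundness.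

Theorem mainTheorem1 (V M : finType) (N : GRN V M)
    (P Q : assertion V M) (p : prog V M) :
  (forall v k, subprog (PAssign v k) p -> k <= bnd N v) ->
  (forall e I p0, subprog (PWhile e I p0) p ->
     ~ exists s : nat -> V -> nat,
         forall i, is_state N (s i) /\ holds N (s i) e /\
                   exists E, sem N p0 (s i) E /\ E (s i.+1)) ->
  derivable N P p Q ->
  forall eta, is_state N eta -> holds N eta P ->
    exists E, sem N p eta E /\ forall eta', E eta' -> holds N eta' Q.
Proof.
move=> assign_bnd loops_term HD eta st HP.
have adm : admissible N p.
  by case=> [||v k||||e I p0|||] //= ; [exact: assign_bnd | exact: loops_term].
have [E [S F]] := derivable_sound HD adm st HP.
by exists E; split => // x /F [].
Qed.
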